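(* Let $E_1,E_2$ be para-Hilbert spaces and let $A=(X_A,H_A,Y_A)\colon E_1\to E_2$ be a morphism admitting a generalized inverse, i.e. a morphism $B\colon E_2\to E_1$ with $ABA=A$ and $BAB=B$. Then each of the following inclusions is dense: $i_{E_1}(\ker X_A)\subset\ker H_A$, $j_{E_1}(\ker H_A)\subset\ker Y_A$, $i_{E_2}(\operatorname{im}X_A)\subset\operatorname{im}H_A$, $j_{E_2}(\operatorname{im}H_A)\subset\operatorname{im}Y_A$.
   Context: A para-Hilbert space $E$ consists of Banach spaces $X_E,Y_E$, a Hilbert space $H_E$ with inner product and Riesz isomorphism $I_E\colon H_E\to H_E'$, bounded linear injections with dense image $i_E\colon X_E\to H_E$, $j_E\colon H_E\to Y_E$, and an isomorphism of Banach spaces $J_E\colon X_E\to Y_E'$ with $j_E'\circ J_E=I_E\circ i_E$ ($'$ denotes duals and dual operators). A morphism $A\colon E_1\to E_2$ is a triple of bounded linear operators $X_A\colon X_{E_1}\to X_{E_2}$, $H_A\colon H_{E_1}\to H_{E_2}$, $Y_A\colon Y_{E_1}\to Y_{E_2}$ with $i_{E_2}X_A=H_Ai_{E_1}$ and $j_{E_2}H_A=Y_Aj_{E_1}$; composition is componentwise. *)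

From HB Require Import structures.
From mathcomp Require Import all_boot all_order all_algebra.
From mathcomp Require Import all_classical all_reals all_analysis.
Set Implicit Arguments. Unset Strict Implicit. Unset Printing Implicit Defensive.
Import Order.TTheory GRing.Theory Num.Theory.
Import numFieldNormedType.Exports.
Local Open Scope ring_scope.
Local Open Scope classical_set_scope.

Section Defs.
Variable R : realType.

Definition bounded_linear (U V : normedModType R) (f : U -> V) : Prop :=
  (forall (a : R) (u v : U), f (a *: u + v) = a *: f u + f v) /\ continuous f.

Definition dense_range (U V : normedModType R) (f : U -> V) : Prop :=
  closure (range f) = setT.

(* a real inner product inducing the (complete) norm of H: H is a Hilbert space *)
Definition is_inner_product (H : normedModType R) (ip : H -> H -> R) : Prop :=
  [/\ (forall x y, ip x y = ip y x),
      (forall (a : R) x y z, ip (a *: x + y) z = a * ip x z + ip y z) &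
      (forall x, ip x x = `|x| ^+ 2)].

Definition cont_lin_functional (Y : normedModType R) (phi : Y -> R) : Prop :=
  (forall (a : R) (u v : Y), phi (a *: u + v) = a * phi u + phi v) /\ continuous phi.

(* J : X -> Y' is an isomorphism of Banach spaces onto the dual Y'
   (Y' with the operator norm) *)
Definition dual_iso (X Y : normedModType R) (J : X -> Y -> R) : Prop :=
  [/\ (forall x, cont_lin_functional (J x)),
      (forall (a : R) (x x' : X) (y : Y), J (a *: x + x') y = a * J x y + J x' y),
      (exists C : R, forall x y, `|J x y| <= C * `|x| * `|y|),
      (forall phi : Y -> R, cont_lin_functional phi -> exists x, J x = phi) &
      (exists C : R, forall (x : X) (M : R), 0 <= M ->
          (forall y, `|J x y| <= M * `|y|) -> `|x| <= C * M)].

End Defs.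

Record paraHilbert (R : realType) := ParaHilbert {
  PX : completeNormedModType R;
  PH : completeNormedModType R;
  PY : completeNormedModType R;
  pip : PH -> PH -> R;
  pip_inner : is_inner_product pip;
  iE : PX -> PH;
  jE : PH -> PY;
  JE : PX -> PY -> R;
  iE_bl : bounded_linear iE;
  iE_inj : injective iE;
  iE_dense : dense_range iE;
  jE_bl : bounded_linear jE;
  jE_inj : injective jE;
  jE_dense : dense_range jE;
  JE_iso : dual_iso JE;
  (* j' o J = I o i, where I h = <h, .> is the Riesz isomorphism *)
  JE_compat : forall (x : PX) (h : PH), JE x (jE h) = pip (iE x) h
}.

Record phMor (R : realType) (E1 E2 : paraHilbert R) := PHMor {
  mX : PX E1 -> PX E2;
  mH : PH E1 -> PH E2;
  mY : PY E1 -> PY E2;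
  mX_bl : bounded_linear mX;
  mH_bl : bounded_linear mH;
  mY_bl : bounded_linear mY;
  mXH : forall x, @iE R E2 (mX x) = mH (@iE R E1 x);
  mHY : forall h, @jE R E2 (mH h) = mY (@jE R E1 h)
}.

(* A B A = A, componentwise (composition of morphisms is componentwise) *)
Definition mor_ABA (R : realType) (E1 E2 : paraHilbert R)
    (A : phMor E1 E2) (B : phMor E2 E1) : Prop :=
  [/\ (forall x, mX A (mX B (mX A x)) = mX A x),
      (forall h, mH A (mH B (mH A h)) = mH A h) &
      (forall y, mY A (mY B (mY A y)) = mY A y)].

Definition dense_in (T : topologicalType) (S U : set T) : Prop :=
  S `<=` U /\ U `<=` closure S.

From HB Require Import structures.
From mathcomp Require Import all_boot all_order all_algebra.
From mathcomp Require Import all_classical all_reals all_analysis.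
Set Implicit Arguments. Unset Strict Implicit. Unset Printing Implicit Defensive.
Import GRing.Theory.
Local Open Scope ring_scope.
Local Open Scope classical_set_scope.

(* Every inclusion comes from pushing a dense subset through a continuous map.
   For images: im H_A is the image under H_A of the dense set i(X), and
   H_A(i(X)) = i(X_A(X)).  For kernels: since ABA = A, the map 1 - BA is a
   projection onto the kernel, at each level; on H it is continuous and fixes
   ker H_A pointwise, so ker H_A is contained in the closure of the image of
   i(X) under 1 - H_B H_A, which is i((1 - X_B X_A)(X)), a subset of
   i(ker X_A).  The same argument applies one level up, with j in place of i. *)

Lemma image_closure (T S : topologicalType) (f : T -> S) (A : set T) :
  continuous f -> f @` closure A `<=` closure (f @` A).
Proof.
move=> fc _ [p Ap <-] B /fc /Ap [x [Ax Bx]].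
by exists (f x); split => //; exists x.
Qed.

Lemma closure_image_dense_range (T S S' : topologicalType) (i : T -> S)
    (f : S -> S') :
  closure (range i) = setT -> continuous f -> range f `<=` closure (f @` range i).
Proof.
by move=> di fc _ [y _ <-]; apply: image_closure => //; exists y; rewrite ?di.
Qed.

Section BoundedLinear.
Variables (R : realType) (U V : normedModType R) (f : U -> V).
Hypothesis f_bl : bounded_linear f.

Lemma bounded_linear0 : f 0 = 0.
Proof.
by have := f_bl.1 1 0 0; rewrite !scale1r addr0 -{1}[f 0]addr0 => /addrI.
Qed.

Lemma bounded_linearB u v : f (u - v) = f u - f v.
Proof. by have := f_bl.1 (-1) v u; rewrite !scaleN1r addrC => ->; rewrite addrC. Qed.

End BoundedLinear.

Lemma dense_in_image_range (X H X' H' : topologicalType) (i : X -> H)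
    (i' : X' -> H') (a : X -> X') (ha : H -> H') :
  closure (range i) = setT -> continuous ha -> (forall x, i' (a x) = ha (i x)) ->
  dense_in (i' @` range a) (range ha).
Proof.
move=> di hac ia; have iaE : i' @` range a = ha @` range i.
  by rewrite !image_comp; apply: eq_imagel => x _; exact: ia.
split; first by move=> _ [_ [x _ <-] <-]; exists (i x).
by rewrite iaE; exact: closure_image_dense_range.
Qed.

Lemma dense_in_image_ker (R : realType) (X H X' H' : normedModType R)
    (i : X -> H) (i' : X' -> H') (a : X -> X') (b : X' -> X)
    (ha : H -> H') (hb : H' -> H) :
  bounded_linear i -> bounded_linear i' -> bounded_linear a ->
  continuous ha -> bounded_linear hb -> closure (range i) = setT ->
  (forall x, i' (a x) = ha (i x)) -> (forall x', i (b x') = hb (i' x')) ->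
  (forall x, a (b (a x)) = a x) ->
  dense_in (i @` [set x | a x = 0]) [set h | ha h = 0].
Proof.
move=> i_bl i'_bl a_bl hac hb_bl di ia ib aba; split.
  by move=> _ [x /= ax0 <-]; rewrite -ia ax0 bounded_linear0.
pose p h := h - hb (ha h).
have p_cont : continuous p.
  move=> h; apply: continuousB; first exact: cvg_id.
  by apply: continuous_comp; [exact: hac | exact: hb_bl.2].
have p_ker h : ha h = 0 -> p h = h by rewrite /p => ->; rewrite bounded_linear0 ?subr0.
have p_range : p @` range i `<=` i @` [set x | a x = 0].
  move=> _ [_ [x _ <-] <-]; exists (x - b (a x)).
    by rewrite /= bounded_linearB // aba subrr.
  by rewrite bounded_linearB // ib ia.
move=> h /= /p_ker <-; apply: (closureS p_range).
exact: closure_image_dense_range.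
Qed.

Theorem corollary2p9 (R : realType) (E1 E2 : paraHilbert R)
    (A : phMor E1 E2) (B : phMor E2 E1) :
  mor_ABA A B -> mor_ABA B A ->
  [/\ dense_in (@iE R E1 @` [set x | mX A x = 0]) [set h | mH A h = 0],
      dense_in (@jE R E1 @` [set h | mH A h = 0]) [set y | mY A y = 0],
      dense_in (@iE R E2 @` range (mX A)) (range (mH A)) &
      dense_in (@jE R E2 @` range (mH A)) (range (mY A))].
Proof.
move=> [abaX abaH _] _; split.
- apply: (dense_in_image_ker _ _ _ _ _ _ (mXH A) (mXH B) abaX);
    [exact: iE_bl | exact: iE_bl | exact: mX_bl | exact: (mH_bl A).2
    | exact: mH_bl | exact: iE_dense].
- apply: (dense_in_image_ker _ _ _ _ _ _ (mHY A) (mHY B) abaH);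
    [exact: jE_bl | exact: jE_bl | exact: mH_bl | exact: (mY_bl A).2
    | exact: mY_bl | exact: jE_dense].
- exact: (dense_in_image_range (@iE_dense _ E1) (mH_bl A).2 (mXH A)).
- exact: (dense_in_image_range (@jE_dense _ E1) (mY_bl A).2 (mHY A)).
Qed.
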